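(* If a sign pattern matrix $A$ allows algebraic positivity, then every super-pattern of $A$ allows algebraic positivity.
   Context: A sign pattern matrix is a matrix with entries in $\{+,-,0\}$; its qualitative class $Q(A)$ is the set of real matrices obtained by replacing each $+$ by some positive number, each $-$ by some negative number and each $0$ by $0$. A real square matrix $M$ is algebraically positive if there is a real polynomial $f$ such that every entry of $f(M)$ is positive; $A$ allows algebraic positivity if some matrix in $Q(A)$ is algebraically positive. A sign pattern $X$ is a subpattern of $A$ if $X$ is obtained from $A$ by replacing some (possibly none) of its nonzero entries with $0$; then $A$ is a super-pattern of $X$. *)

From mathcomp Require Import all_boot all_order all_algebra.
Set Implicit Arguments. Unset Strict Implicit. Unset Printing Implicit Defensive.
Import Order.TTheory GRing.Theory Num.Theory.
Local Open Scope ring_scope.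

Inductive sign := SPos | SNeg | SZero.

Definition spattern (n : nat) := 'M[sign]_n.

Definition has_sign (R : realDomainType) (s : sign) (x : R) : Prop :=
  match s with
  | SPos => 0 < x
  | SNeg => x < 0
  | SZero => x = 0
  end.

Definition in_qual_class (R : realDomainType) (n : nat)
    (A : spattern n) (M : 'M[R]_n) : Prop :=
  forall i j, has_sign (A i j) (M i j).

Definition poly_mx_eval (R : realDomainType) (n : nat)
    (f : {poly R}) (M : 'M[R]_n) : 'M[R]_n :=
  \sum_(i < size f) f`_i *: (M ^+ i).

Definition alg_positive (R : realDomainType) (n : nat) (M : 'M[R]_n) : Prop :=
  exists f : {poly R}, forall i j, 0 < (poly_mx_eval f M) i j.

Definition allows_alg_pos (R : realDomainType) (n : nat) (A : spattern n) : Prop :=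
  exists M : 'M[R]_n, in_qual_class A M /\ alg_positive M.

Definition subpattern (n : nat) (X A : spattern n) : Prop :=
  forall i j, X i j = A i j \/ X i j = SZero.

(* Let M in Q(A) with f(M) > 0 and let E carry the signs of B exactly on the
   entries where A is zero.  For every t > 0 the matrix M + tE lies in Q(B),
   and each entry of f(M + tE) is a polynomial in t which is positive at
   t = 0.  By continuity of polynomials all n^2 entries stay positive for
   small t > 0. *)
From mathcomp Require Import all_boot all_order all_algebra.
From mathcomp Require Import reals polyrcf lra.
Set Implicit Arguments. Unset Strict Implicit. Unset Printing Implicit Defensive.
Import Order.TTheory GRing.Theory Num.Theory.
Local Open Scope ring_scope.

Section PolyPositiveNear.
Variable R : rcfType.

Lemma poly_gt0_near (p : {poly R}) x : 0 < p.[x] ->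
  exists2 d, 0 < d & forall y, `|y - x| < d -> 0 < p.[y].
Proof.
move=> px_gt0; have [d d_gt0 px_near] := poly_cont x p px_gt0.
by exists d => // y /px_near /ltr_distlCBl; rewrite subrr.
Qed.

Lemma polys_gt0_near (I : finType) (p : I -> {poly R}) x :
  (forall i, 0 < (p i).[x]) ->
  exists2 d, 0 < d & forall y i, `|y - x| < d -> 0 < (p i).[y].
Proof.
move=> px_gt0.
have [D D_gt0 D_near] := fin_all_exists2 (fun i => poly_gt0_near (px_gt0 i)).
exists (\big[Order.min/1]_i D i).
  by apply/bigmin_gtP; split=> [|i _]; [exact: ltr01 | exact: D_gt0].
by move=> y i /lt_le_trans /(_ (bigmin_le _ i _)); exact: D_near.
Qed.

End PolyPositiveNear.

Lemma poly_mx_eval_pencil_horner (R : realDomainType) n (f : {poly R})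
    (M E : 'M[R]_n) :
  exists P : 'M[{poly R}]_n,
    forall t i j, poly_mx_eval f (M + t *: E) i j = (P i j).[t].
Proof.
pose P := \sum_(k < size f)
  (f`_k)%:P *: (map_mx polyC M + 'X *: map_mx polyC E) ^+ k.
exists P => t i j.
suff -> : poly_mx_eval f (M + t *: E) = map_mx (horner_eval t) P.
  by rewrite mxE horner_evalE.
rewrite /poly_mx_eval raddf_sum /=; apply: eq_bigr => k _.
rewrite map_mxZ rmorphXn /= map_mxD map_mxZ /= !horner_evalE hornerC hornerX.
by rewrite -!map_mx_comp !map_mx_id // => x /=; rewrite horner_evalE hornerC.
Qed.

Definition sign_val (R : ringType) (s : sign) : R :=
  match s with SPos => 1 | SNeg => -1 | SZero => 0 end.

Definition extra_sign_mx (R : ringType) n (A B : spattern n) : 'M[R]_n :=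
  \matrix_(i, j) if A i j is SZero then sign_val R (B i j) else 0.

Lemma in_qual_class_extra_sign (R : realDomainType) n (A B : spattern n)
    (M : 'M[R]_n) t :
  subpattern A B -> in_qual_class A M -> 0 < t ->
  in_qual_class B (M + t *: extra_sign_mx R A B).
Proof.
move=> subAB MA t_gt0 i j; rewrite !mxE.
have := MA i j; case: (subAB i j) => ->; case: (B i j) => //= MAij;
  by rewrite ?MAij ?mulr0 ?addr0 ?add0r ?mulr1 ?mulrN1 ?oppr_lt0.
Qed.

Theorem theorem3p7 (R : realType) (n : nat) (A B : spattern n) :
  allows_alg_pos R A -> subpattern A B -> allows_alg_pos R B.
Proof.
move=> [M [MA [f fM_gt0]]] subAB.
set E := extra_sign_mx R A B.
have [P PE] := poly_mx_eval_pencil_horner f M E.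
have [|d d_gt0 P_near] :=
  polys_gt0_near (p := fun ij : 'I_n * 'I_n => P ij.1 ij.2) (x := 0).
  by move=> [i j]; rewrite -PE scale0r addr0.
have half_d : 0 < d / 2 < d by lra.
exists (M + (d / 2) *: E); split.
  by apply: in_qual_class_extra_sign; case/andP: half_d.
exists f => i j; rewrite PE; apply: (P_near _ (i, j)).
by rewrite subr0 gtr0_norm; case/andP: half_d.
Qed.
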